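(* Let $p(x,y)$ be a real polynomial in two variables and let $n\ge 2$. Then \[ \langle S_{2,n}\,p(S_{2,n},n)\rangle_n=\frac{n}{2}\langle p(S_{2,n},n)\rangle_n-\frac{n(n-2)}{2(2n-3)}\langle p(S_{2,n-1},n)\rangle_{n-1}, \] where $\langle\cdot\rangle_n$ denotes expectation over $(\Omega_n,P_n)$ and $\langle\cdot\rangle_{n-1}$ expectation over $(\Omega_{n-1},P_{n-1})$.
   Context: For $n\ge 1$, let $\Omega_n$ be the set of rooted plane (ordered) full binary trees with $n$ leaves (every internal node has exactly two children, left and right distinguished; $\Omega_1$ consists of the single-vertex tree). $P_n$ is the uniform probability measure on $\Omega_n$. Horton–Strahler ordering: every leaf has order 1; an internal node whose two children have different orders $r_1\neq r_2$ has order $\max\{r_1,r_2\}$; an internal node whose two children both have order $r$ has order $r+1$. A branch of order $r$ is a maximal connected path consisting of nodes all of order $r$. $S_{2,n}(\tau)$ is the number of branches of order $2$ in $\tau\in\Omega_n$. *)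

From HB Require Import structures.
From mathcomp Require Import all_boot all_order all_algebra.
From mathcomp Require Import mpoly zify.
Set Implicit Arguments. Unset Strict Implicit. Unset Printing Implicit Defensive.
Import Order.TTheory GRing.Theory Num.Theory.

Inductive tree : Type := Leaf : tree | Node : tree -> tree -> tree.

Fixpoint tree_eqb (s t : tree) : bool :=
  match s, t with
  | Leaf, Leaf => true
  | Node l1 r1, Node l2 r2 => tree_eqb l1 l2 && tree_eqb r1 r2
  | _, _ => false
  end.

Lemma tree_eqP : Equality.axiom tree_eqb.
Proof.
elim=> [|l1 IHl r1 IHr] [|l2 r2] /=; try by constructor.
case: (IHl l2) => [->|H]; last by constructor; case.
case: (IHr r2) => [->|H]; last by constructor; case.
by constructor.
Qed.

HB.instance Definition _ := hasDecEq.Build tree tree_eqP.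

Fixpoint leaves (t : tree) : nat :=
  match t with Leaf => 1 | Node l r => leaves l + leaves r end.

Fixpoint hs (t : tree) : nat :=
  match t with
  | Leaf => 1
  | Node l r => let a := hs l in let b := hs r in
                if a == b then a.+1 else maxn a b
  end.

(* Number of branches of order k: each branch (maximal path of nodes of
   order k) is counted through its top node, i.e. a node of order k that is
   the root or whose parent has order different from k.  [par] records
   whether the parent of the current node has order k. *)
Fixpoint branch_tops (k : nat) (t : tree) (par : bool) : nat :=
  ((hs t == k) && ~~ par) +
  match t with
  | Leaf => 0
  | Node l r => branch_tops k l (hs t == k) + branch_tops k r (hs t == k)
  end.

Definition branches (k : nat) (t : tree) : nat := branch_tops k t false.

Definition S2 (t : tree) : nat := branches 2 t.

(* Enumeration of Omega_n: all trees with exactly n leaves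
   (fuel m, always called with m = n). *)
Fixpoint trees_rec (m n : nat) : seq tree :=
  match m with
  | 0 => [::]
  | m'.+1 =>
    if n == 1 then [:: Leaf]
    else flatten [seq [seq Node l r | l <- trees_rec m' k, r <- trees_rec m' (n - k)]
                 | k <- iota 1 n.-1]
  end.

Definition Omega (n : nat) : seq tree := trees_rec n n.

Definition expect {R : fieldType} (n : nat) (f : tree -> R) : R :=
  (\sum_(t <- Omega n) f t) / (size (Omega n))%:R.

Definition ev2 {R : comNzRingType} (p : {mpoly R[2]}) (x y : R) : R :=
  p.@[fun i : 'I_2 => if val i == 0 then x else y].

(* Sanity facts: Omega n is exactly the (duplicate-free) list of all trees
   with n leaves, so [expect] is the expectation under the uniform P_n. *)
Lemma leaves_gt0 t : 0 < leaves t.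
Proof. by elim: t => //= l IH r _; rewrite addn_gt0 IH. Qed.

Lemma mem_trees_rec m n t : n <= m -> (t \in trees_rec m n) = (leaves t == n).
Proof.
elim: m n t => [|m IH] n t Hn /=.
  by rewrite in_nil; have := leaves_gt0 t; move: Hn; rewrite leqn0 => /eqP ->; case: (leaves t).
case: eqP => [->|Hn1].
  rewrite inE; case: t => [|l r] //=.
  have := leaves_gt0 l; have := leaves_gt0 r => ? ?.
  have -> : (Node l r == Leaf) = false by apply/eqP.
  apply/esym/negbTE; lia.
case: t => [|l r].
  have -> : (leaves Leaf == n) = false by apply/eqP => /= E; apply: Hn1.
  apply/negbTE/flattenP => -[s /mapP[k _ ->] /allpairsP[[a b] [_ _ /= E]]] //.
apply/flattenP/eqP => [[s /mapP[k Hk ->] /allpairsP[[a b] [Ha Hb /= [-> ->]]]]|E].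
  rewrite mem_iota in Hk.
  move: Ha Hb; rewrite !IH; try lia.
  move=> /= /eqP Ha' /eqP Hb'; lia.
have:= leaves_gt0 l; have:= leaves_gt0 r => Hr Hl; rewrite /= in E.
exists [seq Node a b | a <- trees_rec m (leaves l), b <- trees_rec m (n - leaves l)].
  apply/mapP; exists (leaves l); last by []. rewrite mem_iota /=; lia.
apply: allpairs_f; rewrite IH; try lia; apply/eqP; lia.
Qed.

Lemma uniq_flatten_map (A B : eqType) (g : A -> seq B) (s : seq A) :
  uniq s -> (forall x, x \in s -> uniq (g x)) ->
  (forall x y z, x \in s -> y \in s -> z \in g x -> z \in g y -> x = y) ->
  uniq (flatten (map g s)).
Proof.
elim: s => //= x s IH /andP[xs us] Hu Hd.
rewrite cat_uniq Hu ?mem_head // IH //; last first.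
- by move=> a b z Ha Hb; apply: Hd; rewrite inE ?Ha ?Hb orbT.
- by move=> a Ha; apply: Hu; rewrite inE Ha orbT.
rewrite andbT; apply/hasPn => z /flattenP[t /mapP[y ys ->] zy]; apply/negP => zx.
have yxs : y \in x :: s by rewrite inE ys orbT.
have E : x = y := Hd _ _ _ (mem_head _ _) yxs zx zy.
by rewrite E ys in xs.
Qed.

Lemma uniq_trees_rec m n : n <= m -> uniq (trees_rec m n).
Proof.
elim: m n => [|m IH] n Hn //=; case: eqP => // Hn1.
apply: uniq_flatten_map; first exact: iota_uniq.
- move=> k; rewrite mem_iota => Hk; apply: allpairs_uniq; try (apply: IH; lia).
  by move=> [a b] [c d] _ _ /= [-> ->].
- move=> x y z; rewrite !mem_iota => Hx Hy /allpairsP[[a b] [Ha Hb /= ->]].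
  move=> /allpairsP[[c d] [Hc Hd /= [E1 E2]]]; subst c d.
  move: Ha Hc; rewrite /= !mem_trees_rec; try lia.
Qed.

Lemma mem_Omega n t : (t \in Omega n) = (leaves t == n).
Proof. exact: mem_trees_rec. Qed.

Lemma uniq_Omega n : uniq (Omega n).
Proof. exact: uniq_trees_rec. Qed.

From HB Require Import structures.
From mathcomp Require Import all_boot all_order all_algebra.
From mathcomp Require Import mpoly zify ring.
Import Order.TTheory GRing.Theory Num.Theory.
Set Implicit Arguments. Unset Strict Implicit. Unset Printing Implicit Defensive.

(* S_2(t) is the number of cherries of t (S2_Node), so n - 2 S_2(t) counts the
   leaves of t lying outside cherries.  Deleting such a leaf (contracting its
   parent) preserves S_2, and every tree of Omega_{n-1} arises exactly 2(n-2)
   times, by grafting the leaf on either side above one of its n-2 internal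
   nodes; hence sum_{Omega_n} (n - 2 S_2) f(S_2) = 2(n-2) sum_{Omega_{n-1}} f(S_2)
   for every f.  We prove this identity, like the Catalan recursion
   n |Omega_n| = 2(2n-3) |Omega_{n-1}|, by induction along the root
   decomposition, symmetrising over the sizes of the two subtrees.  Dividing
   by |Omega_n| gives the formula for any function f of S_2 in place of
   p(., n). *)

Lemma hs_gt0 t : 0 < hs t.
Proof. by elim: t => //= l IHl r IHr; case: eqP => _; lia. Qed.

Lemma hs_eq1 t : (hs t == 1) = (t == Leaf).
Proof.
case: t => //= l r; have -> : (Node l r == Leaf) = false by apply/eqP.
have := hs_gt0 l; have := hs_gt0 r.
by case: (hs l =P hs r) => ? ? ?; apply/eqP; lia.
Qed.

Lemma branch_tops_false k t :
  branch_tops k t false = (hs t == k) + branch_tops k t true.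
Proof. by case: t => [|l r] /=; rewrite andbT andbF add0n ?addnA. Qed.

Lemma S2_Node l r :
  S2 (Node l r) = S2 l + S2 r + ((l == Leaf) && (r == Leaf)).
Proof.
rewrite /S2 /branches -!hs_eq1 [in LHS]/= andbT.
have := hs_gt0 l; have := hs_gt0 r.
case: (boolP (_ == 2)) => [/eqP top2 | top_neq2] r_gt0 l_gt0.
- rewrite !(branch_tops_false _ l) !(branch_tops_false _ r).
  move: top2; case: (hs l =P hs r) => ? ?; lia.
- move: top_neq2; case: (hs l =P hs r) => ? ?; lia.
Qed.

Lemma S2_Node_nocherry l r :
  (2 < leaves (Node l r))%N -> S2 (Node l r) = S2 l + S2 r.
Proof.
move=> gt2; rewrite S2_Node; case: andP => [[/eqP l0 /eqP r0]|_]; last exact: addn0.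
by move: gt2; rewrite l0 r0.
Qed.

Lemma perm_trees_rec_Omega m n : n <= m -> perm_eq (trees_rec m n) (Omega n).
Proof.
move=> le_nm; apply: uniq_perm; [exact: uniq_trees_rec | exact: uniq_Omega |].
by move=> t; rewrite mem_trees_rec // mem_Omega.
Qed.

Lemma big_Omega_Node (R : Type) (idx : R) (op : Monoid.com_law idx) n
    (F : tree -> R) : 1 < n ->
  \big[op/idx]_(t <- Omega n) F t =
  \big[op/idx]_(1 <= k < n)
     \big[op/idx]_(l <- Omega k) \big[op/idx]_(r <- Omega (n - k)) F (Node l r).
Proof.
case: n => [|m] // m_gt0; rewrite /Omega /=.
have -> : (m.+1 == 1) = false by apply/eqP; lia.
rewrite big_flatten /= big_map /index_iota subn1 /=.
apply: eq_big_seq => k; rewrite mem_iota => k_bound.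
rewrite big_allpairs_dep (perm_big _ (perm_trees_rec_Omega _)); last lia.
by apply: eq_bigr => l _; apply/perm_big/perm_trees_rec_Omega; lia.
Qed.

Lemma Omega1 : Omega 1 = [:: Leaf]. Proof. by []. Qed.
Lemma Omega2 : Omega 2 = [:: Node Leaf Leaf]. Proof. by []. Qed.

Lemma size_Omega_gt0 n : 0 < n -> 0 < size (Omega n).
Proof.
move=> n_gt0; have leaves_iter k : leaves (iter k (Node Leaf) Leaf) = k.+1.
  by elim: k => //= k ->.
have : iter n.-1 (Node Leaf) Leaf \in Omega n by rewrite mem_Omega leaves_iter prednK.
by case: (Omega n).
Qed.

Lemma size_Omega_Node n : 1 < n ->
  size (Omega n) = \sum_(1 <= k < n) size (Omega k) * size (Omega (n - k)).
Proof.
move=> n_gt1; rewrite -sum1_size (big_Omega_Node _ _ n_gt1).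
apply: eq_bigr => k _; rewrite -sum1_size big_distrl /=.
by apply: eq_bigr => l _; rewrite mul1n sum1_size.
Qed.

Lemma big_Omega_S2 (R : Type) (idx : R) (op : Monoid.com_law idx) n
    (g : nat -> R) : 2 < n ->
  \big[op/idx]_(t <- Omega n) g (S2 t) =
  \big[op/idx]_(1 <= k < n) \big[op/idx]_(l <- Omega k)
     \big[op/idx]_(r <- Omega (n - k)) g (S2 l + S2 r).
Proof.
move=> n_gt2; rewrite big_Omega_Node; last lia.
apply: eq_big_nat => k k_bound; apply: eq_big_seq => l; rewrite mem_Omega => /eqP l_k.
apply: eq_big_seq => r; rewrite mem_Omega => /eqP r_nk.
by rewrite S2_Node_nocherry //= l_k r_nk; lia.
Qed.

Lemma big_nat1_rev (R : Type) (idx : R) (op : Monoid.com_law idx) N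
    (F : nat -> R) :
  \big[op/idx]_(1 <= i < N) F (N - i) = \big[op/idx]_(1 <= i < N) F i.
Proof. by rewrite [RHS]big_nat_rev; apply: eq_big_nat => i i_bound; congr F; lia. Qed.

Local Open Scope ring_scope.

Lemma sum_complementary_weights (R : pzSemiRingType) N (a : R) (w F : nat -> R) :
  (forall i, (0 < i < N)%N -> w i + w (N - i)%N = a) ->
  (forall i, (0 < i < N)%N -> F (N - i)%N = F i) ->
  2 * \sum_(1 <= i < N) w i * F i = a * \sum_(1 <= i < N) F i.
Proof.
move=> wD Fsym; rewrite mulr_natl mulr2n -[in X in X + _]big_nat1_rev -big_split.
rewrite mulr_sumr; apply: eq_big_nat => i i_bound.
by rewrite Fsym //= -mulrDl addrC wD.
Qed.

Section Counting.
Variable R : comPzRingType.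
Local Notation card k := ((size (Omega k))%:R : R).

Lemma natr_size_Omega_Node k : (1 < k)%N ->
  card k = \sum_(1 <= i < k) card i * card (k - i).
Proof.
by move/size_Omega_Node ->; rewrite natr_sum; apply: eq_bigr => i _; rewrite natrM.
Qed.

Lemma size_Omega_rec n : (1 < n)%N ->
  n%:R * card n = 2 * (2 * n%:R - 3) * card n.-1.
Proof.
elim/ltn_ind: n => n IH n_gt1.
have [->|n_gt2] : (n = 2 \/ 2 < n)%N by lia.
  by rewrite Omega2 Omega1 /=; ring.
have card_sym k i : (0 < i < k)%N ->
    card (k - i) * card (k - (k - i)) = card i * card (k - i).
  by move=> i_bound; rewrite subKn; [exact: mulrC | lia].
set N := n.-1; have n_eq : n = N.+1 by lia.
have weight_id : n%:R * card n = 2 * \sum_(1 <= i < n) i%:R * (card i * card (n - i)).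
  rewrite (@sum_complementary_weights _ _ n%:R) -?natr_size_Omega_Node // => i i_bound.
    by rewrite -natrD subnKC //; lia.
  exact: card_sym.
have weight_odd : 2 * \sum_(1 <= i < N) (2 * i%:R - 1) * (card i * card (N - i))
                  = (2 * N%:R - 2) * card N.
  rewrite (@sum_complementary_weights _ _ (2 * N%:R - 2)) -?natr_size_Omega_Node //.
  - lia.
  - by move=> i i_bound; rewrite natrB; [ring | lia].
  - exact: card_sym.
have shift : \sum_(1 <= i < N) i.+1%:R * (card i.+1 * card (n - i.+1))
             = 2 * \sum_(1 <= i < N) (2 * i%:R - 1) * (card i * card (N - i)).
  rewrite mulr_sumr; apply: eq_big_nat => i i_bound.
  rewrite mulrA IH; [|lia|lia]; rewrite n_eq subSS -natr1; ring.
rewrite weight_id big_ltn; last lia.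
rewrite big_add1 -/N shift weight_odd n_eq subn1 succnK -[N.+1%:R]natr1 Omega1 !mul1r.
ring.
Qed.

Lemma sum_Omega_noncherry n (f : nat -> R) : (1 < n)%N ->
  \sum_(t <- Omega n) (n%:R - 2 * (S2 t)%:R) * f (S2 t)
  = 2 * (n%:R - 2) * \sum_(t <- Omega n.-1) f (S2 t).
Proof.
elim/ltn_ind: n f => n IH f n_gt1.
have [->|n_gt2] : (n = 2 \/ 2 < n)%N by lia.
  by rewrite Omega2 big_seq1 (_ : S2 (Node Leaf Leaf) = 1%N) //; ring.
set N := n.-1; have n_eq : n = N.+1 by lia.
pose left_sum k := \sum_(l <- Omega k) \sum_(r <- Omega (n - k))
                    (k%:R - 2 * (S2 l)%:R) * f (S2 l + S2 r)%N.
pose pair_sum i j := \sum_(l <- Omega i) \sum_(r <- Omega j) f (S2 l + S2 r)%N.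
have split_left : \sum_(t <- Omega n) (n%:R - 2 * (S2 t)%:R) * f (S2 t)
                  = 2 * \sum_(1 <= k < n) left_sum k.
  rewrite (@big_Omega_S2 _ _ _ n (fun s => (n%:R - 2 * s%:R) * f s)) //.
  rewrite mulr_natl mulr2n -[in X in _ = _ + X]big_nat1_rev -big_split.
  apply: eq_big_nat => k k_bound; rewrite /left_sum subKn; last lia.
  rewrite [in X in _ = _ + X]exchange_big -big_split; apply: eq_bigr => l _.
  rewrite -big_split; apply: eq_bigr => r _.
  by rewrite /= [(S2 r + _)%N]addnC natrD natrB; [ring | lia].
have left_sum1 : left_sum 1%N = \sum_(t <- Omega N) f (S2 t).
  rewrite /left_sum Omega1 big_seq1 subn1.
  by apply: eq_bigr => r _; rewrite mulr0 subr0 mul1r.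
have left_sumS i : (0 < i < N)%N ->
    left_sum i.+1 = 2 * ((i%:R - 1) * pair_sum i (N - i)%N).
  move=> i_bound; have IH_r r := IH i.+1 ltac:(lia) (fun s => f (s + S2 r)%N) ltac:(lia).
  rewrite /left_sum exchange_big; under eq_bigr => r _ do rewrite IH_r.
  rewrite -mulr_sumr exchange_big n_eq subSS -[i.+1%:R]natr1 /pair_sum; ring.
have pair_sums : 2 * \sum_(1 <= i < N) (i%:R - 1) * pair_sum i (N - i)%N
                 = (N%:R - 2) * \sum_(t <- Omega N) f (S2 t).
  rewrite (@sum_complementary_weights _ _ (N%:R - 2)).
  - have [->|N_gt2] : (N = 2 \/ 2 < N)%N by lia.
      by rewrite subrr !mul0r.
    by rewrite (@big_Omega_S2 _ _ _ N f).
  - by move=> i i_bound; rewrite natrB; [ring | lia].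
  - move=> i i_bound; rewrite /pair_sum subKn; last lia.
    by rewrite exchange_big; apply: eq_bigr => l _; apply: eq_bigr => r _; rewrite addnC.
rewrite split_left big_ltn; last lia.
rewrite big_add1 -/N left_sum1 (eq_big_nat _ _ left_sumS) -mulr_sumr pair_sums.
by rewrite n_eq -[N.+1%:R]natr1; ring.
Qed.
End Counting.

Lemma expect_S2_mul (R : numFieldType) n (f : nat -> R) : (1 < n)%N ->
  expect n (fun t => (S2 t)%:R * f (S2 t))
  = n%:R / 2 * expect n (fun t => f (S2 t))
    - (n%:R * (n%:R - 2)) / (2 * (2 * n%:R - 3)) * expect n.-1 (fun t => f (S2 t)).
Proof.
move=> n_gt1; rewrite /expect.
set X := \sum_(t <- _) _ * _; set W := \sum_(t <- Omega n) _; set W' := \sum_(t <- _) _.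
have X_eq : X = (n%:R * W - 2 * (n%:R - 2) * W') / 2.
  rewrite -sum_Omega_noncherry // /X /W mulr_sumr -sumrB mulr_suml.
  by apply: eq_bigr => t _; field.
have n_neq0 : n%:R != 0 :> R by rewrite pnatr_eq0 -lt0n ltnW.
have n3_neq0 : 2 * n%:R - 3 != 0 :> R by rewrite -natrM -natrB ?pnatr_eq0; lia.
have card_neq0 : (size (Omega n))%:R != 0 :> R.
  by rewrite pnatr_eq0 -lt0n size_Omega_gt0 // ltnW.
have card'_eq : (size (Omega n.-1))%:R
                = n%:R * (size (Omega n))%:R / (2 * (2 * n%:R - 3)) :> R.
  by rewrite size_Omega_rec //; field.
rewrite X_eq card'_eq; field.
by rewrite n3_neq0 card_neq0 n_neq0.
Qed.

Theorem proposition1 (R : realFieldType) (p : {mpoly R[2]}) (n : nat) :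
  (2 <= n)%N ->
  expect n (fun t => (S2 t)%:R * ev2 p (S2 t)%:R n%:R)
  = n%:R / 2 * expect n (fun t => ev2 p (S2 t)%:R n%:R)
    - (n%:R * (n%:R - 2)) / (2 * (2 * n%:R - 3))
      * expect n.-1 (fun t => ev2 p (S2 t)%:R n%:R).
Proof. exact: (expect_S2_mul (fun k => ev2 p k%:R n%:R)). Qed.
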